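(* Under $\mathsf{SBIM}(n,k,p,q_1,q_2)$ with $m=n/k$, every adaptive group testing scheme that exactly recovers $X$ from noiseless tests, using $T$ tests, satisfies $$\mathbb{E}[T]\ \ge\ m\cdot\mathbb{E}_{Z,Z'}\Big[(k-Z)\,\mathsf{h}_\mathsf{b}\big(1-(1-q_1)^Z(1-q_2)^{Z'}\big)\Big],$$ where $Z\sim\mathsf{Binom}(k,p)$ and $Z'\sim\mathsf{Binom}(n-k,p)$ are independent.
   Context: Stochastic block infection model $\mathsf{SBIM}(n,k,p,q_1,q_2)$: the vertex set $[n]$ is partitioned into $m=n/k$ known communities $\mathcal{C}_1,\dots,\mathcal{C}_m$, each of size $k$. Each vertex is independently a seed with probability $p\in(0,1]$. Then every seed $v$ independently infects each other vertex $u$ in its own community with probability $q_1\in[0,1]$ and each vertex outside its community with probability $q_2\in[0,1]$ (all transmission events mutually independent and independent of seed selection). $X_v=1$ iff $v$ is a seed or is infected by some seed. A test on $S$ returns $\bigvee_{i\in S}X_i$ noiselessly; adaptive schemes choose tests based on previous outcomes and must recover $X$ exactly. $\mathsf{h}_\mathsf{b}$ is the binary entropy function in bits. *)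

From mathcomp Require Import all_boot all_order all_algebra.
From mathcomp Require Import reals exp.
Set Implicit Arguments. Unset Strict Implicit. Unset Printing Implicit Defensive.
Import Order.TTheory GRing.Theory Num.Theory.
Local Open Scope ring_scope.

Definition xlog2 {R : realType} (x : R) : R :=
  if x == 0 then 0 else x * ln x / ln 2.
Definition hb {R : realType} (x : R) : R := - xlog2 x - xlog2 (1 - x).

Definition bern {R : realType} (r : R) (b : bool) : R := if b then r else 1 - r.

Definition binpmf {R : realType} (N : nat) (p : R) (z : nat) : R :=
  'C(N, z)%:R * p ^+ z * (1 - p) ^+ (N - z).

(* Vertices are 'I_N with N = m * k; community of v is v %/ k
   (communities C_j = {j k, ..., j k + k - 1}). *)
Definition same_comm (k : nat) {N : nat} (u v : 'I_N) : bool := (u %/ k == v %/ k)%N.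

(* Transmission probability from seed u to vertex v (self-transmission is
   irrelevant; it is given probability 0). *)
Definition trans_prob {R : realType} (k : nat) (q1 q2 : R) {N : nat}
  (u v : 'I_N) : R :=
  if u == v then 0 else if same_comm k u v then q1 else q2.

(* Sample space: seed indicators and transmission indicators
   (w.2 (u, v) = true means "u would infect v if u is a seed"). *)
Definition outcome (N : nat) : finType :=
  ({ffun 'I_N -> bool} * {ffun ('I_N * 'I_N) -> bool})%type.

Definition sbim_weight {R : realType} {N : nat} (k : nat) (p q1 q2 : R)
  (w : outcome N) : R :=
  (\prod_(v : 'I_N) bern p (w.1 v)) *
  \prod_(uv : 'I_N * 'I_N) bern (trans_prob k q1 q2 uv.1 uv.2) (w.2 uv).

Definition infection {N : nat} (w : outcome N) : {ffun 'I_N -> bool} :=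
  [ffun v => w.1 v || [exists u, w.1 u && w.2 (u, v)]].

(* Deterministic adaptive group testing scheme as a decision tree:
   Test S t0 t1 tests the pool S and continues with t0 on a negative
   and t1 on a positive outcome; Decide y outputs the estimate y. *)
Inductive gt_scheme (N : nat) : Type :=
| Decide of {ffun 'I_N -> bool}
| Test of {set 'I_N} & gt_scheme N & gt_scheme N.

Definition test_result {N : nat} (S : {set 'I_N}) (x : {ffun 'I_N -> bool}) : bool :=
  [exists i in S, x i].

Fixpoint gt_run {N : nat} (t : gt_scheme N) (x : {ffun 'I_N -> bool})
  : nat * {ffun 'I_N -> bool} :=
  match t with
  | Decide y => (0%N, y)
  | Test pool t0 t1 =>
      let r := if test_result pool x then gt_run t1 x else gt_run t0 x in
      (r.1.+1, r.2)
  end.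

Definition exact_recovery {R : realType} {N : nat} (k : nat) (p q1 q2 : R)
  (t : gt_scheme N) : Prop :=
  forall w : outcome N, 0 < sbim_weight k p q1 q2 w ->
    (gt_run t (infection w)).2 = infection w.

Definition expected_tests {R : realType} {N : nat} (k : nat) (p q1 q2 : R)
  (t : gt_scheme N) : R :=
  \sum_(w : outcome N) sbim_weight k p q1 q2 w * ((gt_run t (infection w)).1)%:R.

From mathcomp Require Import all_boot all_order all_algebra.
From mathcomp Require Import reals exp.
From mathcomp Require Import ring lra zify.
Set Implicit Arguments. Unset Strict Implicit. Unset Printing Implicit Defensive.
Import Order.TTheory GRing.Theory Num.Theory.
Local Open Scope ring_scope.

(* The proof is Shannon's source-coding bound applied conditionally on the
   seeds.  First, the numbers of tests a decision tree spends on the inputs it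
   decodes satisfy Kraft's inequality (kraft_scheme).  Second, Gibbs'
   inequality turns Kraft's inequality into "mean length >= entropy" for every
   law of independent bits whose support is decoded (source_coding).  Third,
   given the seed indicator s, transmissions into distinct targets are
   independent, so the infection vector has independent coordinates, v being
   clean with probability [v is no seed] * prod_(seeds u) (1 - q(u, v))
   (infection_law).  Averaging over s gives E[T] >= E_s[sum_v hb(...)]
   (seed_average_bound).  Finally, the entropy of a non-seed v depends only
   on the numbers of seeds inside and outside its community, which are
   independent binomials (seed_counts_binomial); summing community by
   community yields m times the binomial expectation of the statement
   (average_status_entropy). *)

Definition decodes {N : nat} (t : gt_scheme N) (x : {ffun 'I_N -> bool}) : bool :=
  (gt_run t x).2 == x.

Lemma gt_run_Test N (S : {set 'I_N}) (t0 t1 : gt_scheme N) x :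
  gt_run (Test S t0 t1) x =
  let r := gt_run (if test_result S x then t1 else t0) x in (r.1.+1, r.2).
Proof. by rewrite /=; case: test_result. Qed.

Section Kraft.
Variable R : realType.

(* Kraft's inequality: the numbers of tests spent on the inputs a scheme
   decodes are the codeword lengths of a binary prefix code. *)
Lemma kraft_scheme N (t : gt_scheme N) :
  \sum_(x | decodes t x) (2^-1 : R) ^+ (gt_run t x).1 <= 1.
Proof.
elim: t => [y|S t0 IH0 t1 IH1].
  by rewrite (big_pred1 y) ?expr0 // => x; rewrite /decodes /= eq_sym.
(* the inputs whose test outcome is b are decoded by branch b, one test later *)
have branch (b : bool) :
    \sum_(x | decodes (Test S t0 t1) x && (test_result S x == b))
      (2^-1 : R) ^+ (gt_run (Test S t0 t1) x).1 <= 2^-1.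
  have Kb : \sum_(x | decodes (if b then t1 else t0) x)
      (2^-1 : R) ^+ (gt_run (if b then t1 else t0) x).1 <= 1 by case: b.
  rewrite (eq_big (fun x => decodes (if b then t1 else t0) x && (test_result S x == b))
      (fun x => 2^-1 * (2^-1 : R) ^+ (gt_run (if b then t1 else t0) x).1)); first last.
  - by move=> x /andP[_ /eqP <-]; rewrite gt_run_Test /= exprS.
  - move=> x; rewrite /decodes gt_run_Test /=.
    by case: (eqVneq (test_result S x) b) => [->|_]; rewrite ?andbF ?andbT.
  rewrite -mulr_sumr -[X in _ <= X]mulr1; apply: ler_wpM2l; first lra.
  apply: le_trans Kb; rewrite [X in _ <= X](bigID (fun x => test_result S x == b)) /=.
  by rewrite lerDl; apply: sumr_ge0 => x _; apply: exprn_ge0; lra.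
rewrite (partition_big (test_result S) xpredT) //= big_bool /=.
by have := branch true; have := branch false; lra.
Qed.
End Kraft.

Section SourceCoding.
Variable R : realType.

Definition surprisal (a : R) : R := if a == 0 then 0 else - ln a / ln 2.

Lemma xlog2_surprisal (a : R) : - xlog2 a = a * surprisal a.
Proof.
by rewrite /xlog2 /surprisal; case: eqP => _; rewrite ?oppr0 ?mulr0 // mulNr mulrN mulrA.
Qed.

Lemma ln2_gt0 : 0 < ln (2 : R).
Proof. by apply: ln_gt0; lra. Qed.

Lemma ln_prod (I : finType) (f : I -> R) :
  (forall i, 0 < f i) -> ln (\prod_i f i) = \sum_i ln (f i).
Proof.
move=> f_gt0; pose K (a b : R) := 0 < a /\ ln a = b.
suff [] : K (\prod_i f i) (\sum_i ln (f i)) by [].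
apply: (big_rec2 K); first by split; [exact: ltr01 | exact: ln1].
by move=> i a b _ [a_gt0 <-]; split; [exact: mulr_gt0 | rewrite lnM ?posrE].
Qed.

(* The pointwise Gibbs inequality: for a probability a > 0 and a length L,
   a (L - log2 (1/a)) >= (a - 2^-L) / ln 2; it comes from ln y <= y - 1
   at y = 2^-L / a. *)
Lemma gibbs_term (a : R) (L : nat) : 0 < a ->
  (a - (2^-1) ^+ L) / ln 2 <= a * (L%:R + ln a / ln 2).
Proof.
move=> a_gt0; have c_gt0 := ln2_gt0.
have h_gt0 : 0 < (2^-1 : R) ^+ L by apply: exprn_gt0; lra.
have ln_h : ln ((2^-1 : R) ^+ L) = - (L%:R * ln 2).
  by rewrite lnXn ?lnV ?posrE ?invr_gt0 // ?mulNrn ?mulr_natl //; lra.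
have ln_ratio : ln ((2^-1 : R) ^+ L / a) <= (2^-1) ^+ L / a - 1.
  by have := @le_ln1Dx R ((2^-1) ^+ L / a - 1); rewrite addrCA subrr addr0; apply;
    rewrite ltrBDl subrr divr_gt0.
rewrite ln_div ?posrE // ln_h in ln_ratio.
have key : a - (2^-1) ^+ L <= a * (L%:R * ln 2 + ln a).
  rewrite -subr_ge0.
  have -> : a * (L%:R * ln 2 + ln a) - (a - (2^-1) ^+ L) =
      a * ((2^-1) ^+ L / a - 1 - (- (L%:R * ln 2) - ln a)) by field; rewrite gt_eqF.
  by apply: mulr_ge0; lra.
rewrite ler_pdivrMr //.
suff -> : a * (L%:R + ln a / ln 2) * ln 2 = a * (L%:R * ln 2 + ln a) by [].
by field; rewrite gt_eqF.
Qed.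

Variables (I : finType) (pmf : I -> bool -> R).
Hypothesis pmf_ge0 : forall v b, 0 <= pmf v b.
Hypothesis pmf_sum1 : forall v, pmf v true + pmf v false = 1.

Definition prod_law (x : {ffun I -> bool}) : R := \prod_v pmf v (x v).

Lemma prod_law_ge0 x : 0 <= prod_law x.
Proof. exact: prodr_ge0. Qed.

Lemma prod_law_sum1 : \sum_x prod_law x = 1.
Proof.
rewrite /prod_law -(bigA_distr_bigA (R:=R) pmf) /=.
by apply: big1 => v _; rewrite big_bool /= pmf_sum1.
Qed.

Lemma prod_law_marginal v (g : bool -> R) :
  \sum_x prod_law x * g (x v) = \sum_b pmf v b * g b.
Proof.
pose F w b := pmf w b * (if w == v then g b else 1).
have E x : prod_law x * g (x v) = \prod_w F w (x w).
  rewrite /prod_law (bigD1 v) //= [RHS](bigD1 v) //= /F eqxx mulrAC.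
  by congr (_ * _); apply: eq_bigr => w /negbTE ->; rewrite mulr1.
under eq_bigr => x _ do rewrite E.
rewrite -(bigA_distr_bigA (R:=R) F) /= (bigD1 v) //= [X in _ * X]big1 ?mulr1.
  by apply: eq_bigr => b _; rewrite /F eqxx.
by move=> w /negbTE wv; rewrite big_bool /= /F wv !mulr1 pmf_sum1.
Qed.

Lemma prod_law_entropy :
  \sum_x prod_law x * \sum_v surprisal (pmf v (x v)) = \sum_v hb (pmf v true).
Proof.
under eq_bigr => x _ do rewrite mulr_sumr.
rewrite exchange_big /=; apply: eq_bigr => v _.
rewrite (prod_law_marginal v (fun b => surprisal (pmf v b))) big_bool /= /hb.
have -> : 1 - pmf v true = pmf v false by have := pmf_sum1 v; lra.
by rewrite -!xlog2_surprisal.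
Qed.

Lemma prod_law_surprisal x : 0 < prod_law x ->
  \sum_v surprisal (pmf v (x v)) = - ln (prod_law x) / ln 2.
Proof.
move=> x_gt0.
have pmf_gt0 v : 0 < pmf v (x v).
  rewrite lt_def pmf_ge0 andbT; apply/eqP => pmf0.
  by move: x_gt0; rewrite /prod_law (bigD1 v) //= pmf0 mul0r ltxx.
rewrite ln_prod // -sumrN mulr_suml; apply: eq_bigr => v _.
by rewrite /surprisal gt_eqF.
Qed.

Variables (L : {ffun I -> bool} -> nat) (ok : pred {ffun I -> bool}).
Hypothesis kraftL : \sum_(x | ok x) (2^-1 : R) ^+ L x <= 1.
Hypothesis ok_support : forall x, 0 < prod_law x -> ok x.

Lemma source_coding : \sum_v hb (pmf v true) <= \sum_x prod_law x * (L x)%:R.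
Proof.
rewrite -prod_law_entropy -subr_ge0 -sumrB.
have term x : (prod_law x - (if 0 < prod_law x then (2^-1 : R) ^+ L x else 0)) / ln 2 <=
    prod_law x * (L x)%:R - prod_law x * \sum_v surprisal (pmf v (x v)).
  have [x_gt0|x_le0] := ltP 0 (prod_law x).
    by rewrite prod_law_surprisal // -mulrBr mulNr opprK; exact: gibbs_term.
  have -> : prod_law x = 0 by apply/le_anti; rewrite x_le0 prod_law_ge0.
  by rewrite subr0 !mul0r subr0.
apply: le_trans (ler_sum _ (fun x _ => term x)).
rewrite -mulr_suml sumrB prod_law_sum1 divr_ge0 ?(ltW ln2_gt0) // subr_ge0.
apply: le_trans kraftL; rewrite [X in _ <= X]big_mkcond /=; apply: ler_sum => x _.
case: ifP => [/ok_support -> //|_]; case: ifP => // _; apply: exprn_ge0; lra.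
Qed.
End SourceCoding.

Section InfectionLaw.
Variable R : realType.

Lemma prod_indicator (I : finType) (P : pred I) :
  \prod_i ((P i)%:R : R) = ([forall i, P i])%:R.
Proof.
case: (boolP [forall i, P i]) => [/forallP P_all|/forallPn [i /negbTE P_i]].
  by apply: big1 => i _; rewrite P_all.
by rewrite (bigD1 i) //= P_i mul0r.
Qed.

Lemma sum_ffun_prod (I : finType) (f : I -> bool -> R) :
  \sum_(c : {ffun I -> bool}) \prod_u f u (c u) = \prod_u (f u true + f u false).
Proof.
by rewrite -(bigA_distr_bigA (R:=R) f) /=; apply: eq_bigr => u _; rewrite big_bool.
Qed.

Lemma bern_sum (r : R) : bern r true + bern r false = 1.
Proof. by rewrite /bern addrC subrK. Qed.

Variables (N : nat) (tp : 'I_N -> 'I_N -> R).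

Definition trans_law (e : {ffun ('I_N * 'I_N) -> bool}) : R :=
  \prod_(uv : 'I_N * 'I_N) bern (tp uv.1 uv.2) (e uv).

Definition by_target (e : {ffun ('I_N * 'I_N) -> bool}) :
  {ffun 'I_N -> {ffun 'I_N -> bool}} := [ffun v => [ffun u => e (u, v)]].
Definition of_targets (C : {ffun 'I_N -> {ffun 'I_N -> bool}}) :
  {ffun ('I_N * 'I_N) -> bool} := [ffun uv => C uv.2 uv.1].

Lemma of_targetsK : cancel of_targets by_target.
Proof. by move=> C; apply/ffunP => v; apply/ffunP => u; rewrite !ffunE. Qed.
Lemma by_targetK : cancel by_target of_targets.
Proof. by move=> e; apply/ffunP => -[u v]; rewrite !ffunE. Qed.

Definition clean_prob (s : {ffun 'I_N -> bool}) (v : 'I_N) : R :=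
  if s v then 0 else \prod_u (if s u then 1 - tp u v else 1).

Definition status_pmf s v (b : bool) : R :=
  if b then 1 - clean_prob s v else clean_prob s v.

(* The status of v only depends on the transmissions into v. *)
Definition status_of (s c : {ffun 'I_N -> bool}) (v : 'I_N) : bool :=
  s v || [exists u, s u && c u].

Lemma trans_law_by_target e :
  trans_law e = \prod_v \prod_u bern (tp u v) (by_target e v u).
Proof.
rewrite /trans_law (eq_bigr (fun uv => bern (tp uv.1 uv.2) (e (uv.1, uv.2)))); last by case.
rewrite -(pair_bigA _ (fun u v => bern (tp u v) (e (u, v)))) exchange_big /=.
by apply: eq_bigr => v _; apply: eq_bigr => u _; rewrite !ffunE.
Qed.

Lemma infection_by_target s e x :
  ((infection (s, e) == x)%:R : R) =
  \prod_v ((status_of s (by_target e v) v == x v)%:R).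
Proof.
have status v : status_of s (by_target e v) v = infection (s, e) v.
  by rewrite /status_of !ffunE /=; congr (_ || _); apply: eq_existsb => u; rewrite !ffunE.
rewrite prod_indicator; congr ((nat_of_bool _)%:R).
apply/eqP/forallP => [<- v|same]; first by rewrite status.
by apply/ffunP => v; rewrite -status; apply/eqP.
Qed.

Lemma status_law s v b :
  \sum_(c : {ffun 'I_N -> bool}) (\prod_u bern (tp u v) (c u)) *
    ((status_of s c v == b)%:R) = status_pmf s v b.
Proof.
have total : \sum_(c : {ffun 'I_N -> bool}) \prod_u bern (tp u v) (c u) = 1.
  by rewrite (sum_ffun_prod (fun u b => bern (tp u v) b)); apply: big1 => u _; exact: bern_sum.
have escape : \sum_(c : {ffun 'I_N -> bool})
    (\prod_u bern (tp u v) (c u)) * ((~~ [exists u, s u && c u])%:R : R) =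
    \prod_u (if s u then 1 - tp u v else 1).
  have split_ind (c : {ffun 'I_N -> bool}) :
      (\prod_u bern (tp u v) (c u)) * ((~~ [exists u, s u && c u])%:R : R) =
      \prod_u (bern (tp u v) (c u) * ((~~ (s u && c u))%:R : R)).
    by rewrite big_split /= prod_indicator negb_exists.
  rewrite (eq_bigr _ (fun c _ => split_ind c)).
  rewrite (sum_ffun_prod (fun u b => bern (tp u v) b * ((~~ (s u && b))%:R : R))).
  by apply: eq_bigr => u _; case: (s u); rewrite /bern /=; ring.
rewrite /status_pmf /clean_prob /status_of; case: (s v) => /=.
  by rewrite -mulr_suml total mul1r; case: b; rewrite /= ?subr0.
case: b; last by rewrite -escape; apply: eq_bigr => c _; case: [exists u, _].
rewrite -escape -[X in X - _]total -sumrB; apply: eq_bigr => c _.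
by case: [exists u, _] => /=; ring.
Qed.

Lemma infection_law s x :
  \sum_e trans_law e * ((infection (s, e) == x)%:R) = \prod_v status_pmf s v (x v).
Proof.
pose col v (c : {ffun 'I_N -> bool}) : R :=
  (\prod_u bern (tp u v) (c u)) * ((status_of s c v == x v)%:R).
have factor e : trans_law e * ((infection (s, e) == x)%:R) = \prod_v col v (by_target e v).
  by rewrite trans_law_by_target infection_by_target -big_split.
rewrite (eq_bigr _ (fun e _ => factor e)).
rewrite (reindex of_targets); last by exists by_target => C _; [exact: of_targetsK|exact: by_targetK].
under eq_bigr => C _ do rewrite of_targetsK.
by rewrite -(bigA_distr_bigA (R:=R) col) /=; apply: eq_bigr => v _; exact: status_law.
Qed.

Lemma infection_law_expect s (G : {ffun 'I_N -> bool} -> R) :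
  \sum_e trans_law e * G (infection (s, e)) = \sum_x prod_law (status_pmf s) x * G x.
Proof.
have point e : trans_law e * G (infection (s, e)) =
    \sum_x G x * (trans_law e * ((infection (s, e) == x)%:R)).
  rewrite (bigD1 (infection (s, e))) //= eqxx mulr1 big1 ?addr0 1?mulrC //.
  by move=> x /negbTE; rewrite eq_sym => ->; rewrite !mulr0.
rewrite (eq_bigr _ (fun e _ => point e)) exchange_big /=; apply: eq_bigr => x _.
by rewrite -mulr_sumr infection_law mulrC.
Qed.
End InfectionLaw.

Definition seed_law {R : realType} {I : finType} (p : R) (s : {ffun I -> bool}) : R :=
  \prod_v bern p (s v).

Section ConditionalBound.
Variable R : realType.
Variables (N k : nat) (p q1 q2 : R).
Hypotheses (hp : 0 < p <= 1) (hq1 : 0 <= q1 <= 1) (hq2 : 0 <= q2 <= 1).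

Local Notation tp := (@trans_prob R k q1 q2 N).

Lemma bern_ge0 (r : R) b : 0 <= r <= 1 -> 0 <= bern r b.
Proof. by case/andP; case: b => /=; lra. Qed.

Lemma trans_prob01 u v : 0 <= tp u v <= 1.
Proof. by rewrite /trans_prob; case: eqP => _; [rewrite lexx ler01 | case: ifP]. Qed.

Lemma trans_law_ge0 e : 0 <= trans_law tp e.
Proof. by apply: prodr_ge0 => uv _; apply: bern_ge0; exact: trans_prob01. Qed.

Lemma clean_prob01 s v : 0 <= clean_prob tp s v <= 1.
Proof.
rewrite /clean_prob; case: (s v); first by rewrite lexx ler01.
apply/andP; split.
  by apply: prodr_ge0 => u _; case: (s u); have /andP[] := trans_prob01 u v; lra.
apply: prodr_ile1 => u _; case: (s u); have /andP[] := trans_prob01 u v => ? ?.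
  by apply/andP; split; lra.
by rewrite ler01 lexx.
Qed.

Lemma status_pmf_ge0 s v b : 0 <= status_pmf tp s v b.
Proof. by rewrite /status_pmf; have /andP[] := clean_prob01 s v; case: b; lra. Qed.

Lemma status_pmf_sum1 s v : status_pmf tp s v true + status_pmf tp s v false = 1.
Proof. by rewrite /status_pmf subrK. Qed.

Variable t : gt_scheme N.
Hypothesis recovers : exact_recovery k p q1 q2 t.

Lemma expected_tests_by_seeds :
  expected_tests k p q1 q2 t =
  \sum_s seed_law p s * \sum_e trans_law tp e * ((gt_run t (infection (s, e))).1)%:R.
Proof.
rewrite /expected_tests (eq_bigr (fun w : outcome N => seed_law p w.1 *
    (trans_law tp w.2 * ((gt_run t (infection (w.1, w.2))).1)%:R))); last first.
  by case=> s e _; rewrite /sbim_weight mulrA.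
rewrite -(pair_bigA _ (fun s e => seed_law p s *
    (trans_law tp e * ((gt_run t (infection (s, e))).1)%:R))) /=.
by apply: eq_bigr => s _; rewrite mulr_sumr.
Qed.

Lemma conditional_bound s : 0 < seed_law p s ->
  \sum_v hb (status_pmf tp s v true) <=
  \sum_e trans_law tp e * ((gt_run t (infection (s, e))).1)%:R.
Proof.
move=> s_gt0; rewrite (infection_law_expect tp s (fun x => ((gt_run t x).1)%:R)).
apply: (source_coding (status_pmf_ge0 s) (status_pmf_sum1 s) (kraft_scheme R t)).
(* a possible infection vector comes from a possible outcome, so it is decoded *)
move=> x x_gt0.
have [e /andP[_ e_gt0]] :
    exists e, true && (0 < trans_law tp e * ((infection (s, e) == x)%:R)).
  apply: psumr_neq0P => [e _|]; first by rewrite mulr_ge0 ?trans_law_ge0.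
  by rewrite infection_law; apply/eqP; exact: lt0r_neq0.
have e_inf : infection (s, e) = x.
  by apply/eqP; move: e_gt0; case: (_ == x) => //; rewrite mulr0 ltxx.
move: e_gt0; rewrite e_inf eqxx mulr1 => e_gt0.
rewrite /decodes -e_inf; apply/eqP; apply: recovers.
by rewrite /sbim_weight /=; exact: mulr_gt0.
Qed.

Lemma seed_average_bound :
  \sum_s seed_law p s * \sum_v hb (status_pmf tp s v true) <= expected_tests k p q1 q2 t.
Proof.
rewrite expected_tests_by_seeds; apply: ler_sum => s _.
have [s_gt0|s_le0] := ltP 0 (seed_law p s).
  by apply: ler_wpM2l; [exact: ltW | exact: conditional_bound].
have -> : seed_law p s = 0.
  by apply/le_anti; rewrite s_le0 prodr_ge0 // => v _; apply: bern_ge0; case/andP: hp => /ltW -> ->.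
by rewrite !mul0r.
Qed.
End ConditionalBound.

Section SeedCounting.
Variable R : realType.

Lemma sum_kronecker (n i : nat) (f : nat -> R) : (i <= n)%N ->
  \sum_(z < n.+1) ((i == z)%:R * f z) = f i.
Proof.
move=> i_le; rewrite (bigD1 (inord i)) //= inordK ?ltnS // eqxx mul1r big1 ?addr0 //.
move=> j; rewrite -(inj_eq val_inj) /= inordK ?ltnS // => /negbTE ji.
by rewrite eq_sym ji mul0r.
Qed.

Lemma sum_indicator (I : finType) (P : pred I) :
  \sum_(i : I) ((P i)%:R : R) = (#|[set i | P i]|)%:R.
Proof.
rewrite (eq_bigr (fun i => if P i then (1 : R) else 0)) => [|i _]; last by case: (P i).
by rewrite -big_mkcond /= sumr_const cardsE.
Qed.

Lemma sum_by_two_counts (I : finType) (a b : I -> nat) (n n' : nat)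
    (F : nat -> nat -> R) :
  (forall i, a i <= n)%N -> (forall i, b i <= n')%N ->
  \sum_i F (a i) (b i) =
  \sum_(z < n.+1) \sum_(z' < n'.+1) #|[set i | (a i == z) && (b i == z')]|%:R * F z z'.
Proof.
move=> a_le b_le.
have delta i : \sum_(z < n.+1) \sum_(z' < n'.+1)
    (((a i == z) && (b i == z'))%:R * F z z') = F (a i) (b i).
  rewrite -(sum_kronecker (fun z => F z (b i)) (a_le i)); apply: eq_bigr => z _.
  rewrite -(sum_kronecker (F z) (b_le i)) mulr_sumr; apply: eq_bigr => z' _.
  by rewrite mulrA -natrM mulnb.
rewrite -(eq_bigr _ (fun i _ => delta i)) exchange_big /=; apply: eq_bigr => z _.
rewrite exchange_big /=; apply: eq_bigr => z' _.
by rewrite -mulr_suml sum_indicator.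
Qed.

Variables (I : finType) (A : {set I}).

(* A set is determined by its parts inside and outside A, which are
   arbitrary subsets of A and of its complement. *)
Lemma card_split_sets z z' :
  #|[set S : {set I} | (#|S :&: A| == z) && (#|S :\: A| == z')]| =
  ('C(#|A|, z) * 'C(#|~: A|, z'))%N.
Proof.
pose split (S : {set I}) := (S :&: A, S :\: A).
have split_inj : injective split.
  by move=> S1 S2 [eqI eqD]; rewrite -(setID S1 A) -(setID S2 A) eqI eqD.
rewrite -(card_imset _ split_inj) -!cards_draws -cardsX.
apply: eq_card => -[B C]; rewrite !inE; apply/imsetP/andP => [[S] | [/andP[BA /eqP cB] /andP[CA /eqP cC]]].
  rewrite inE => /andP[zS z'S] [-> ->].
  by rewrite subsetIr subsetDr zS z'S.
have BI : (B :|: C) :&: A = B.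
  apply/setP => x; rewrite !inE; case xB: (x \in B); first by rewrite (subsetP BA).
  by case xA: (x \in A); rewrite ?andbF //= andbT; apply/negP => /(subsetP CA); rewrite inE xA.
have CD : (B :|: C) :\: A = C.
  apply/setP => x; rewrite !inE; case xA: (x \in A) => /=.
    by symmetry; apply/negP => /(subsetP CA); rewrite inE xA.
  by case xB: (x \in B) => //=; move: (subsetP BA x xB); rewrite xA.
by exists (B :|: C); rewrite ?inE /split BI CD ?cB ?cC ?eqxx.
Qed.

Lemma seed_law_on (p : R) (B S : {set I}) :
  \prod_(u in B) bern p (u \in S) = p ^+ #|S :&: B| * (1 - p) ^+ (#|B| - #|S :&: B|).
Proof.
rewrite (bigID (fun u => u \in S)) /=.
rewrite (eq_bigr (fun _ => p)); last by move=> u /andP[_ ->].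
rewrite [X in _ * X](eq_bigr (fun _ => 1 - p)); last by move=> u /andP[_ /negbTE ->].
rewrite !prodr_const; congr (_ ^+ _ * _ ^+ _).
  by apply: eq_card => u; rewrite !inE andbC.
by rewrite setIC -cardsD; apply: eq_card => u; rewrite !inE andbC.
Qed.

Lemma seed_counts_binomial (p : R) (G : nat -> nat -> R) :
  \sum_(s : {ffun I -> bool}) seed_law p s *
    G #|[set u | s u] :&: A| #|[set u | s u] :\: A| =
  \sum_(z < #|A|.+1) \sum_(z' < #|~: A|.+1)
    binpmf #|A| p z * binpmf #|~: A| p z' * G z z'.
Proof.
pose W (z z' : nat) : R := p ^+ z * (1 - p) ^+ (#|A| - z) *
  (p ^+ z' * (1 - p) ^+ (#|~: A| - z')) * G z z'.
rewrite (reindex (fun S : {set I} => [ffun u => u \in S])); last first.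
  exists (fun s : {ffun I -> bool} => [set u | s u]) => x _.
    by apply/setP => u; rewrite !inE ffunE.
  by apply/ffunP => u; rewrite ffunE inE.
have term (S : {set I}) : seed_law p [ffun u => u \in S] *
    G #|[set u | [ffun u => u \in S] u] :&: A| #|[set u | [ffun u => u \in S] u] :\: A| =
    W #|S :&: A| #|S :\: A|.
  have -> : [set u | [ffun u => u \in S] u] = S by apply/setP => u; rewrite inE ffunE.
  rewrite /seed_law (eq_bigr (fun u => bern p (u \in S))) => [|u _]; last by rewrite ffunE.
  rewrite (bigID (fun u => u \in A)) /=.
  have -> : \prod_(u | u \notin A) bern p (u \in S) = \prod_(u in ~: A) bern p (u \in S).
    by apply: eq_bigl => u; rewrite inE.
  by rewrite !seed_law_on -setDE.
rewrite (eq_bigr _ (fun S _ => term S)).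
rewrite (@sum_by_two_counts _ (fun S => #|S :&: A|) (fun S => #|S :\: A|) #|A| #|~: A|).
- apply: eq_bigr => z _; apply: eq_bigr => z' _.
  by rewrite card_split_sets natrM /W /binpmf; ring.
- by move=> S; apply/subset_leq_card/subsetIr.
- by move=> S; apply/subset_leq_card/subsetDr.
Qed.
End SeedCounting.

Section Communities.
Variable R : realType.
Variables (m k : nat) (q1 q2 : R).

Local Notation N := (m * k)%N.
Local Notation tp := (@trans_prob R k q1 q2 N).

Definition community (j : nat) : {set 'I_N} := [set u : 'I_N | (u %/ k)%N == j].

Lemma community_index_lt (v : 'I_N) : (v %/ k < m)%N.
Proof.
case: k v => [|k'] v; first by case: v => /= i; rewrite muln0.
by rewrite ltn_divLR //; exact: ltn_ord.
Qed.

Definition community_of (v : 'I_N) : 'I_m := Ordinal (community_index_lt v).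

Lemma card_community (j : 'I_m) : #|community j| = k.
Proof.
have jk_lt i : (i < k)%N -> (j * k + i < N)%N.
  move=> ik; have : (j.+1 * k <= m * k)%N by rewrite leq_mul2r ltn_ord orbT.
  by rewrite mulSn; lia.
pose member (i : 'I_k) : 'I_N := Ordinal (jk_lt i (ltn_ord i)).
have member_inj : injective member by move=> a b /(congr1 val) /= ?; apply: val_inj => /=; lia.
rewrite -[RHS](card_ord k) -cardsT -(card_imset _ member_inj); apply: eq_card => u.
rewrite inE; apply/eqP/imsetP => [uj|[i _ ->]].
  have k_gt0 : (0 < k)%N by case: k u uj => [|k'] [u' hu'] //=; rewrite muln0 in hu'.
  exists (Ordinal (ltn_pmod u k_gt0)); first by rewrite inE.
  by apply: val_inj => /=; rewrite {1}(divn_eq u k) uj; lia.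
rewrite /member /= divnMDl; last by case: k i => [[]|].
by rewrite divn_small ?addn0.
Qed.

Lemma card_community_compl (j : 'I_m) : #|~: community j| = (N - k)%N.
Proof. by have := cardsC (community j); rewrite card_community card_ord; lia. Qed.

Lemma hb1 : hb (1 : R) = 0.
Proof. by rewrite /hb /xlog2 subrr eqxx oner_eq0 ln1 /=; ring. Qed.

Lemma status_entropy s v : hb (status_pmf tp s v true) = ((~~ s v)%:R : R) *
  hb (1 - (1 - q1) ^+ #|[set u | s u] :&: community (v %/ k)| *
          (1 - q2) ^+ #|[set u | s u] :\: community (v %/ k)|).
Proof.
rewrite /status_pmf /clean_prob; case sv: (s v) => /=; first by rewrite subr0 hb1 mul0r.
rewrite mul1r; congr (hb (1 - _)).
pose inside u := s u && (u %/ k == v %/ k)%N.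
rewrite (bigID inside) /= (bigID (fun u => s u) (fun u => ~~ inside u)) /=.
rewrite [X in _ * (_ * X)]big1 => [|u /andP[_ /negbTE ->] //]; rewrite mulr1.
rewrite (eq_bigr (fun _ => 1 - q1)) => [|u /andP[su same]]; last first.
  rewrite su /trans_prob /same_comm same.
  by case: eqP => // uv; move: su; rewrite uv sv.
rewrite [X in _ * X](eq_bigr (fun _ => 1 - q2)) => [|u /andP[]]; last first.
  rewrite /inside => /nandP[/negP//|/negbTE other] su.
  by rewrite su /trans_prob /same_comm other; case: eqP => // uv; rewrite uv eqxx in other.
by rewrite !prodr_const; congr (_ ^+ _ * _ ^+ _); apply: eq_card => u;
  rewrite !inE unfold_in /inside /=; case: (s u); rewrite /= ?andbT ?andbF.
Qed.

Lemma sum_by_community (s : {ffun 'I_N -> bool}) (F : nat -> R) :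
  \sum_(v : 'I_N) ((~~ s v)%:R : R) * F (v %/ k)%N =
  \sum_(j < m) ((k - #|[set u | s u] :&: community j|)%:R * F j).
Proof.
rewrite (partition_big community_of xpredT) //=; apply: eq_bigr => j _.
rewrite (eq_bigr (fun v => F j * ((~~ s v)%:R))) => [|v /eqP <-]; last by rewrite mulrC.
rewrite -mulr_sumr mulrC big_mkcond /=; congr (_ * _).
rewrite (eq_bigr (fun v => (((community_of v == j) && ~~ s v)%:R : R))) => [|v _]; last first.
  by case: (_ == j).
rewrite sum_indicator; congr (_%:R).
transitivity (#|community j| - #|[set u | s u] :&: community j|)%N; last by rewrite card_community.
by rewrite setIC -cardsD; apply: eq_card => u; rewrite !inE -(inj_eq val_inj) andbC.
Qed.

Lemma average_status_entropy (p : R) :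
  \sum_s seed_law p s * \sum_v hb (status_pmf tp s v true) =
  m%:R * (\sum_(z < k.+1) \sum_(z' < (m * k - k).+1)
            binpmf k p z * binpmf (m * k - k) p z' *
            ((k - z)%:R * hb (1 - (1 - q1) ^+ z * (1 - q2) ^+ z'))).
Proof.
pose G (z z' : nat) : R := (k - z)%:R * hb (1 - (1 - q1) ^+ z * (1 - q2) ^+ z').
have by_comm (s : {ffun 'I_N -> bool}) :
    seed_law p s * \sum_v hb (status_pmf tp s v true) =
    \sum_(j < m) seed_law p s *
      G #|[set u | s u] :&: community j| #|[set u | s u] :\: community j|.
  rewrite (eq_bigr _ (fun v _ => status_entropy s v)).
  by rewrite (sum_by_community s (fun j => hb (1 - (1 - q1) ^+ #|[set u | s u] :&: community j| *
    (1 - q2) ^+ #|[set u | s u] :\: community j|))) mulr_sumr.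
rewrite (eq_bigr _ (fun s _ => by_comm s)) exchange_big /=.
rewrite (eq_bigr (fun _ => \sum_(z < k.+1) \sum_(z' < (m * k - k).+1)
    binpmf k p z * binpmf (m * k - k) p z' * G z z')) => [|j _].
  by rewrite sumr_const card_ord mulr_natl.
by have := seed_counts_binomial (community j) p G; rewrite card_community card_community_compl.
Qed.
End Communities.

Theorem lemma5 (R : realType) (m k : nat) (p q1 q2 : R)
  (hp : 0 < p <= 1) (hq1 : 0 <= q1 <= 1) (hq2 : 0 <= q2 <= 1)
  (t : gt_scheme (m * k)) :
  exact_recovery k p q1 q2 t ->
  m%:R * (\sum_(z < k.+1) \sum_(z' < (m * k - k).+1)
            binpmf k p z * binpmf (m * k - k) p z' *
            ((k - z)%:R * hb (1 - (1 - q1) ^+ z * (1 - q2) ^+ z')))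
  <= expected_tests k p q1 q2 t.
Proof.
move=> recovers; rewrite -(average_status_entropy m k q1 q2 p).
exact: (seed_average_bound hp hq1 hq2 recovers).
Qed.
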